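(* Let $\mathcal{V}$ be a finite vocabulary, fix a decoding context $c$, let $P(\cdot\mid c)$ be the base next-token distribution on $\mathcal{V}$, and let $t_1 := \arg\max_{t} P(t\mid c)$ be the base model's top token. Let $\mathcal{V}$ be partitioned into $n \ge 1$ buckets and let the required bucket be drawn uniformly at random from the $n$ buckets; let $t^\star$ denote the highest-$P(\cdot\mid c)$-probability token in the required bucket. For each possible required bucket, let $Q(\cdot\mid c)$ be any probability distribution on $\mathcal{V}$ satisfying $Q(t^\star\mid c) \ge Q(t\mid c)$ for all $t\in\mathcal{V}$ (so $t^\star$ is an argmax of $Q$). Define the per-token perplexity \[ \mathrm{PPL}(Q) := \exp\Bigl(\mathbb{E}\bigl[-\log Q(t_1\mid c)\bigr]\Bigr), \] where the expectation is over the uniformly random required bucket. Then \[ \mathrm{PPL}(Q) \;\ge\; 2^{(n-1)/n}. \]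
   Context: Logarithms are natural. The channel carries $\log_2 n$ bits per token; perplexity of the steganographic distribution $Q$ is evaluated on the base model's top token $t_1$. *)

From HB Require Import structures.
From mathcomp Require Import all_boot all_order all_algebra.
From mathcomp Require Import all_classical all_reals all_analysis.
Set Implicit Arguments. Unset Strict Implicit. Unset Printing Implicit Defensive.
Import Order.TTheory GRing.Theory Num.Theory.
Local Open Scope ring_scope.

Definition neglog {R : realType} (x : R) : \bar R :=
  if (0 < x) then (- ln x)%:E else +oo%E.

(* Per-token perplexity: exp of the expectation, over a uniformly random
   required bucket j : 'I_n, of -log Q_j(t1). *)
Definition ppl {R : realType} (n : nat) (q_t1 : 'I_n -> R) : \bar R :=
  expeR (\sum_(j < n) ((n%:R)^-1)%:E * neglog (q_t1 j))%E.

From HB Require Import structures.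
From mathcomp Require Import all_boot all_order all_algebra.
From mathcomp Require Import all_classical all_reals all_analysis.
From mathcomp Require Import lra.
Import Order.TTheory GRing.Theory Num.Theory.
Local Open Scope ring_scope.

(* If the required bucket j is not the bucket of t1, then t1 and the argmax
   t*_j of Q_j are distinct tokens, so Q_j(t1) <= Q_j(t*_j) forces
   Q_j(t1) <= 1/2, i.e. -log Q_j(t1) >= log 2.  This happens for n - 1 of
   the n buckets, and -log Q_j(t1) >= 0 for the remaining one; averaging and
   exponentiating gives PPL >= exp((n-1)/n log 2). *)

Section FiniteDistribution.

Context {R : realFieldType} {T : finType} {q : T -> R}.
Hypotheses (q_ge0 : forall t, 0 <= q t) (q_sum1 : \sum_t q t = 1).

Lemma prob_le1 t : q t <= 1.
Proof. by rewrite -q_sum1 (bigD1 t) //= lerDl sumr_ge0. Qed.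

Lemma prob_le_half s t : s != t -> q t <= q s -> q t <= 2^-1.
Proof.
move=> st qts; have qst : q s + q t <= 1.
  rewrite -q_sum1 (bigD1 s) //= (bigD1 t) 1?eq_sym //= addrA lerDl.
  exact: sumr_ge0.
lra.
Qed.

End FiniteDistribution.

Lemma sum_indicator_neq {R : pzSemiRingType} {T : finType} (b : T) :
  \sum_(j : T) (j != b)%:R = (#|T|.-1)%:R :> R.
Proof.
rewrite (bigD1 b) //= eqxx add0r -(cardC1 b) -sumr_const.
by apply: eq_bigr => j ->.
Qed.

Lemma ln_le_neglog {R : realType} (a x : R) :
  0 < a -> x <= a^-1 -> ((ln a)%:E <= neglog x)%E.
Proof.
move=> a_gt0 xa; rewrite /neglog; case: ifP => [x_gt0|_]; last exact: leey.
by rewrite lee_fin lerNr -lnV ?posrE // ler_ln ?posrE ?invr_gt0.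
Qed.

Lemma expR_mean_le_ppl {R : realType} {n : nat} (q c : 'I_n -> R) :
  (forall j, ((c j)%:E <= neglog (q j))%E) ->
  ((expR (n%:R^-1 * \sum_j c j))%:E <= ppl q)%E.
Proof.
move=> c_le; rewrite mulr_sumr.
have -> : (expR (\sum_j n%:R^-1 * c j))%:E = expeR (\sum_j (n%:R^-1 * c j)%:E).
  by rewrite sumEFin.
rewrite /ppl lee_expeR; apply: lee_sum => j _; rewrite EFinM.
by apply: lee_wpmul2l; rewrite ?lee_fin ?invr_ge0.
Qed.

Theorem theorem7p2 (R : realType) (V : finType) (P : V -> R)
  (n : nat) (bucket : V -> 'I_n) (t1 : V) (tstar : 'I_n -> V)
  (Q : 'I_n -> V -> R) :
  (0 < n)%N ->
  (forall t, 0 <= P t) -> \sum_(t : V) P t = 1 ->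
  (forall t, P t <= P t1) ->
  (forall j, bucket (tstar j) = j) ->
  (forall j t, bucket t = j -> P t <= P (tstar j)) ->
  (forall j t, 0 <= Q j t) -> (forall j, \sum_(t : V) Q j t = 1) ->
  (forall j t, Q j t <= Q j (tstar j)) ->
  (((2 : R) `^ ((n%:R - 1) / n%:R))%:E <= ppl (fun j => Q j t1))%E.
Proof.
move=> n_gt0 _ _ _ tstar_in _ Q_ge0 Q_sum1 Q_tstar_max.
set b := bucket t1.
have Q_t1 j : (((j != b)%:R * ln 2)%:E <= neglog (Q j t1))%E.
  have [->|jb] := eqVneq j b.
    by rewrite mul0r -ln1 ln_le_neglog ?invr1 ?prob_le1.
  rewrite mul1r ln_le_neglog //.
  apply: prob_le_half (Q_ge0 j) (Q_sum1 j) _ _ _ (Q_tstar_max j t1).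
  by apply: contra_neq jb => tstar_t1; rewrite /b -tstar_t1 tstar_in.
apply: le_trans (expR_mean_le_ppl (fun j => Q j t1) _ Q_t1).
have nE : n%:R - 1 = n.-1%:R :> R by rewrite -[n in LHS]prednK // -natr1 addrK.
rewrite -mulr_suml sum_indicator_neq card_ord lee_fin.
rewrite -[X in X <= _]lnK ?posrE ?powR_gt0 // ln_powR nE.
by rewrite mulrA [_^-1 * _]mulrC.
Qed.
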